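(* Let $M$ be a $\mathscr{D}(R,V)$-module. Set $I=\mathrm{Ann}_R(M)$ and $J = (I:\pi^{\infty}) := \{a\in R\mid a\pi^m\in I \text{ for some integer } m \geq 0\}$. Then $J$ is a $\mathscr{D}(R,V)$-submodule of $R$.
   Context: Let $(V, \pi V, k)$ be a DVR of mixed characteristic $(0,p)$ (i.e. $V$ has characteristic zero, maximal ideal generated by $\pi$, and residue field $k$ of characteristic $p>0$), and let $R$ be either $V[[x_1, \ldots, x_n]]$ or $V[x_1, \ldots, x_n]$ for some $n \geq 0$. $\mathscr{D}(R,V)$ denotes the ring of $V$-linear differential operators on $R$, and $\mathscr{D}(R,V)$-modules are left modules over it. *)

From HB Require Import structures.
From mathcomp Require Import all_boot all_order all_algebra zify.
From mathcomp Require Import boolp.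
Set Implicit Arguments. Unset Strict Implicit. Unset Printing Implicit Defensive.
Import GRing.Theory.
Local Open Scope ring_scope.

Section PSer.
Variable A : comNzRingType.
Definition pser : Type := nat -> A.
HB.instance Definition _ := Choice.on pser.

Definition ps_zero : pser := fun _ => 0.
Definition ps_opp (f : pser) : pser := fun k => - f k.
Definition ps_add (f g : pser) : pser := fun k => f k + g k.
Lemma ps_addA : associative ps_add.
Proof. by move=> f g h; apply/funext => k; rewrite /ps_add addrA. Qed.
Lemma ps_addC : commutative ps_add.
Proof. by move=> f g; apply/funext => k; rewrite /ps_add addrC. Qed.
Lemma ps_add0 : left_id ps_zero ps_add.
Proof. by move=> f; apply/funext => k; rewrite /ps_add /ps_zero add0r. Qed.
Lemma ps_addN : left_inverse ps_zero ps_opp ps_add.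
Proof. by move=> f; apply/funext => k; rewrite /ps_add /ps_opp /ps_zero addNr. Qed.
HB.instance Definition _ := GRing.isZmodule.Build pser ps_addA ps_addC ps_add0 ps_addN.

Definition ps_one : pser := fun k => (k == 0)%:R.
Definition ps_mul (f g : pser) : pser :=
  fun k => \sum_(i < k.+1) f i * g (k - i)%N.

Lemma ps_mulE (f g : pser) k N : (k < N)%N ->
  ps_mul f g k = \sum_(i < N) \sum_(j < N | (i + j == k)%N) f i * g j.
Proof.
move=> kN; rewrite /ps_mul.
transitivity (\sum_(i < N | (i < k.+1)%N) f i * g (k - i)%N).
  by rewrite (big_ord_widen _ (fun i : nat => f i * g (k - i)%N) kN).
rewrite [RHS](bigID (fun i : 'I_N => (i < k.+1)%N)) /= [X in _ + X]big1 ?addr0.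
  apply: eq_bigr => i ik.
  have H : (k - i < N)%N by lia.
  rewrite (big_pred1 (Ordinal H)) // => j /=.
  by rewrite -(inj_eq val_inj) /=; apply/eqP/eqP; lia.
move=> i; rewrite -leqNgt => ki; rewrite big_pred0 // => j; apply/eqP; lia.
Qed.

Lemma ps_mulC : commutative ps_mul.
Proof.
move=> f g; apply/funext => k; rewrite !(ps_mulE _ _ (ltnSn k)).
rewrite (exchange_big_dep xpredT) //=.
apply: eq_bigr => i _; apply: eq_big => j; first by rewrite addnC.
by rewrite mulrC.
Qed.

Lemma collapse k N (i j l : nat) (X : A) : (k < N)%N ->
  \sum_(m < N | (i + m == k)%N && (j + l == m)%N) X =
  if (i + j + l == k)%N then X else 0.
Proof.
move=> kN; case: ifP => E.
  have H : (j + l < N)%N by move/eqP: E; lia.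
  rewrite (big_pred1 (Ordinal H)) // => m /=.
  apply/andP/eqP => [[/eqP E1 /eqP E2]|->]; first by apply: val_inj => /=; lia.
  by split; apply/eqP => //=; move/eqP: E; lia.
rewrite big_pred0 // => m; apply/andP => -[/eqP E1 /eqP E2]; move/negbT/eqP: E; lia.
Qed.

Lemma ps_mulA : associative ps_mul.
Proof.
move=> f g h; apply/funext => k; set N := k.+1.
have kN : (k < N)%N by [].
rewrite (ps_mulE _ _ kN) (ps_mulC (ps_mul f g)) (ps_mulE _ _ kN).
transitivity (\sum_(i < N) \sum_(j < N) \sum_(l < N)
   if (i + j + l == k)%N then f i * g j * h l else 0).
  apply: eq_bigr => i _.
  rewrite (eq_bigr (fun m : 'I_N => \sum_(j < N) \sum_(l < N | (j + l == m)%N) f i * (g j * h l))); last first.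
    move=> m /eqP im; rewrite (ps_mulE _ _ (_ : (m < N)%N)); last by lia.
    by rewrite mulr_sumr; apply: eq_bigr => j _; rewrite mulr_sumr.
  rewrite exchange_big /=; apply: eq_bigr => j _.
  rewrite (exchange_big_dep (fun _ => true)) //=; apply: eq_bigr => l _.
  by rewrite (collapse _ _ _ _ kN) mulrA.
symmetry.
transitivity (\sum_(m < N) \sum_(i < N) \sum_(j < N)
   if (m + i + j == k)%N then h m * (f i * g j) else 0).
  apply: eq_bigr => m _.
  rewrite (eq_bigr (fun l : 'I_N => \sum_(i < N) \sum_(j < N | (i + j == l)%N) h m * (f i * g j))); last first.
    move=> l /eqP ml; rewrite (ps_mulE _ _ (_ : (l < N)%N)); last by lia.
    by rewrite mulr_sumr; apply: eq_bigr => i _; rewrite mulr_sumr.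
  rewrite exchange_big /=; apply: eq_bigr => i _.
  rewrite (exchange_big_dep (fun _ => true)) //=; apply: eq_bigr => j _.
  by rewrite (collapse _ _ _ _ kN).
rewrite exchange_big /=; apply: eq_bigr => i _.
rewrite exchange_big /=; apply: eq_bigr => j _.
apply: eq_bigr => m _.
have -> : (m + i + j = i + j + m)%N by lia.
by case: ifP => // _; rewrite mulrC.
Qed.

Lemma ps_mul1 : left_id ps_one ps_mul.
Proof.
move=> f; apply/funext => k; rewrite /ps_mul big_ord_recl /= /ps_one /= mul1r subn0.
by rewrite big1 ?addr0 // => i _; rewrite mul0r.
Qed.

Lemma ps_mulDl : left_distributive ps_mul ps_add.
Proof.
move=> f g h; apply/funext => k; rewrite /ps_mul /ps_add -big_split /=.
by apply: eq_bigr => i _; rewrite mulrDl.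
Qed.

Lemma ps_one_neq0 : ps_one != ps_zero.
Proof.
apply/eqP => /(congr1 (fun f : pser => f 0%N)); rewrite /ps_one /ps_zero /=.
by move/eqP; rewrite oner_eq0.
Qed.

HB.instance Definition _ := GRing.Zmodule_isComNzRing.Build pser
  ps_mulA ps_mulC ps_mul1 ps_mulDl ps_one_neq0.

Definition psC (a : A) : pser := fun k => if k is 0%N then a else 0.
End PSer.

Unset Implicit Arguments.

(* The rings R = V[x_1,...,x_n] and R = V[[x_1,...,x_n]], realised as        *)
(* iterated one-variable polynomial / power series rings over V, together    *)
(* with the structure map V -> R.                                           *)

Fixpoint polyn (V : comNzRingType) (n : nat) : comNzRingType :=
  if n is n'.+1 then ({poly polyn V n'} : comNzRingType) else V.

Fixpoint polynC (V : comNzRingType) (n : nat) : V -> polyn V n :=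
  match n return V -> polyn V n with
  | 0 => fun v => v
  | n'.+1 => fun v => (polynC V n' v)%:P
  end.

Fixpoint psern (V : comNzRingType) (n : nat) : comNzRingType :=
  if n is n'.+1 then (pser (psern V n') : comNzRingType) else V.

Fixpoint psernC (V : comNzRingType) (n : nat) : V -> psern V n :=
  match n return V -> psern V n with
  | 0 => fun v => v
  | n'.+1 => fun v => psC (psernC V n' v)
  end.

Variant ring_kind := PolyRing | PowerSeriesRing.

Definition Rring (b : ring_kind) (V : comNzRingType) (n : nat) : comNzRingType :=
  match b with PolyRing => polyn V n | PowerSeriesRing => psern V n end.

Definition Rmap (b : ring_kind) (V : comNzRingType) (n : nat) : V -> Rring b V n :=
  match b return V -> Rring b V n with
  | PolyRing => polynC V n
  | PowerSeriesRing => psernC V n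
  end.

Definition is_DVR_with_uniformizer (V : idomainType) (pi : V) : Prop :=
  [/\ pi != 0, pi \isn't a GRing.unit &
      forall a : V, a != 0 ->
        exists u : V, exists k : nat, u \is a GRing.unit /\ a = u * pi ^+ k].

Definition char_zero (V : idomainType) : Prop :=
  forall m : nat, (0 < m)%N -> (m%:R : V) != 0.

(* the residue field V / pi V has characteristic p *)
Definition residue_char (V : idomainType) (pi : V) (p : nat) : Prop :=
  exists c : V, (p%:R : V) = c * pi.

Section DiffOps.
Variables (V : comNzRingType) (R : comNzRingType) (iota : V -> R).

Definition Vlinear (d : R -> R) : Prop :=
  (forall x y, d (x + y) = d x + d y) /\
  (forall (v : V) x, d (iota v * x) = iota v * d x).

Fixpoint diffop_ord (k : nat) (d : R -> R) : Prop :=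
  Vlinear d /\
  match k with
  | 0 => forall r x, d (r * x) = r * d x
  | k'.+1 => forall r, diffop_ord k' (fun x => d (r * x) - r * d x)
  end.

Definition diffop (d : R -> R) : Prop := exists k, diffop_ord k d.

Definition mulop (r : R) : R -> R := fun x => r * x.

(* A left D(R,V)-module: an abelian group M with an action of the ring
   D(R,V) (whose sum is pointwise sum, product is composition, unit is id). *)
Record DModule := {
  dm_car :> zmodType;
  dm_act : (R -> R) -> dm_car -> dm_car;
  dm_act_addm : forall d, diffop d ->
    forall m m', dm_act d (m + m') = dm_act d m + dm_act d m';
  dm_act_addd : forall d e, diffop d -> diffop e ->
    forall m, dm_act (fun x => d x + e x) m = dm_act d m + dm_act e m;
  dm_act_comp : forall d e, diffop d -> diffop e ->
    forall m, dm_act (fun x => d (e x)) m = dm_act d (dm_act e m);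
  dm_act_id : forall m, dm_act (fun x => x) m = m
}.

Definition annihilator (M : DModule) : R -> Prop :=
  fun a => forall m : M, dm_act M (mulop a) m = 0.

Definition saturation (pi : V) (I : R -> Prop) : R -> Prop :=
  fun a => exists m : nat, I (a * iota pi ^+ m).

Definition is_D_submodule (S : R -> Prop) : Prop :=
  [/\ S 0,
      (forall a b, S a -> S b -> S (a + b)) &
      (forall d a, diffop d -> S a -> S (d a))].

End DiffOps.

Arguments Vlinear {V R} iota d.
Arguments diffop_ord {V R} iota k d.
Arguments diffop {V R} iota d.
Arguments mulop {R} r x.
Arguments DModule {V R} iota.
Arguments dm_act {V R iota} _ _ _.
Arguments annihilator {V R iota} M a.
Arguments saturation {V R} iota pi I a.
Arguments is_D_submodule {V R} iota S.

From HB Require Import structures.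
From mathcomp Require Import all_boot all_order all_algebra.
From mathcomp Require Import boolp ring.
Set Implicit Arguments. Unset Strict Implicit. Unset Printing Implicit Defensive.
Import GRing.Theory.
Local Open Scope ring_scope.

(* Let a kill M and let d be in D(R,V).  The commutator E = d o a - a o d is a
   differential operator acting as zero on M, with E(1) = d(a) - a d(1).  Let
   x_1, ..., x_n be coordinates of R with dual V-derivations D_1, ..., D_n.  An
   operator E of order <= k killing M may be replaced by
     Phi(E) = sum_(j <= k) (-1)^j (k!/j!) ad_x^j(E) o D^j,   ad_x(F) = F o x - x o F,
   which still kills M, commutes with x (the sum telescopes since ad_x^(k+1) E = 0),
   keeps commuting with the other coordinates, and has Phi(E)(1) = k! E(1).  Doing
   this once per coordinate yields an operator commuting with every x_i, hence equal
   to multiplication by N E(1) for an integer N > 0 (for power series, by Krull's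
   intersection theorem), so N d(a) kills M.  In V we have N = u pi^j with u a
   unit, and d is V-linear, so a pi^m in Ann(M) gives d(a) pi^(m+j) in Ann(M). *)

Section AdditiveMaps.
Variables (U W : zmodType) (f : U -> W).
Hypothesis fD : {morph f : x y / x + y}.

Lemma additive0 : f 0 = 0.
Proof. by apply: (addrI (f 0)); rewrite -fD !addr0. Qed.

Lemma additiveN x : f (- x) = - f x.
Proof. by apply: (addrI (f x)); rewrite -fD !subrr additive0. Qed.

Lemma additiveB x y : f (x - y) = f x - f y.
Proof. by rewrite fD additiveN. Qed.

Lemma additiveMn x m : f (x *+ m) = f x *+ m.
Proof. by elim: m => [|m IH]; rewrite ?additive0 // !mulrS fD IH. Qed.

Lemma additive_sum I (r : seq I) (P : pred I) (F : I -> U) :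
  f (\sum_(i <- r | P i) F i) = \sum_(i <- r | P i) f (F i).
Proof. exact: (big_morph f fD additive0). Qed.

End AdditiveMaps.

Definition derivation (R : comNzRingType) (D : R -> R) : Prop :=
  {morph D : a b / a + b} /\ forall a b, D (a * b) = a * D b + D a * b.

Lemma derivation1 (R : comNzRingType) (D : R -> R) : derivation D -> D 1 = 0.
Proof.
case=> _ DM; have := DM 1 1; rewrite !mulr1 mul1r => D11.
by apply: (addrI (D 1)); rewrite addr0 -D11.
Qed.

Section DifferentialOperators.
Variables (V R : comNzRingType) (iota : V -> R).
Implicit Types (d e : R -> R) (r : R).

Definition ad r d : R -> R := fun y => d (r * y) - r * d y.

Lemma diffop_ord_Vlinear k d : diffop_ord iota k d -> Vlinear iota d.
Proof. by case: k => [[]|k []]. Qed.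

Lemma diffop_Vlinear d : diffop iota d -> Vlinear iota d.
Proof. by case=> k /diffop_ord_Vlinear. Qed.

Lemma ad_const0 r : ad r (fun _ => 0) = (fun _ => 0).
Proof. by apply/funext => y; rewrite /ad mulr0 subr0. Qed.

Lemma ad_diffop_ord0 r d : diffop_ord iota 0 d -> ad r d = (fun _ => 0).
Proof. by case=> _ dM; apply/funext => y; rewrite /ad dM subrr. Qed.

Lemma diffop_ord_const0 k : diffop_ord iota k (fun _ => 0).
Proof.
have lin0 : Vlinear iota (fun _ : R => 0) by split=> *; rewrite ?addr0 ?mulr0.
elim: k => [|k IH]; split=> // r; first by move=> y; rewrite mulr0.
by rewrite -/(ad r _) ad_const0.
Qed.

Lemma diffop_ordS k d : diffop_ord iota k d -> diffop_ord iota k.+1 d.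
Proof.
elim: k d => [|k IH] d dk; split; first exact: diffop_ord_Vlinear dk.
- by move=> r; rewrite -/(ad r d) ad_diffop_ord0 //; apply: diffop_ord_const0.
- exact: diffop_ord_Vlinear dk.
- by move=> r; apply: IH; apply: dk.2.
Qed.

Lemma diffop_ord_le k l d : (k <= l)%N -> diffop_ord iota k d -> diffop_ord iota l d.
Proof.
move=> /subnKC <-; elim: (l - k)%N => [|m IH] dk; first by rewrite addn0.
by rewrite addnS; apply/diffop_ordS/IH.
Qed.

Lemma Vlinear_add d e : Vlinear iota d -> Vlinear iota e ->
  Vlinear iota (fun y => d y + e y).
Proof.
move=> [dD dV] [eD eV]; split=> *; rewrite ?dD ?eD ?dV ?eV.
  by rewrite addrACA.
by rewrite mulrDr.
Qed.

Lemma Vlinear_comp d e : Vlinear iota d -> Vlinear iota e ->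
  Vlinear iota (fun y => d (e y)).
Proof. by move=> [dD dV] [eD eV]; split=> *; rewrite ?eD ?dD ?eV ?dV. Qed.

Lemma diffop_ord_add k d e : diffop_ord iota k d -> diffop_ord iota k e ->
  diffop_ord iota k (fun y => d y + e y).
Proof.
elim: k d e => [|k IH] d e dk ek; split; try by apply: Vlinear_add;
  [apply: diffop_ord_Vlinear dk | apply: diffop_ord_Vlinear ek].
  by move=> r y; rewrite dk.2 ek.2 mulrDr.
move=> r; rewrite -/(ad r _).
have -> : ad r (fun y => d y + e y) = (fun y => ad r d y + ad r e y).
  by apply/funext => y; rewrite /ad mulrDr opprD addrACA.
exact: IH (dk.2 r) (ek.2 r).
Qed.

Lemma diffop_ord0_comp k d e : diffop_ord iota 0 d -> diffop_ord iota k e ->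
  diffop_ord iota k (fun y => d (e y)).
Proof.
move=> d0; have [[dD _] dM] := d0.
elim: k e => [|k IH] e ek; split; try by apply: Vlinear_comp;
  [apply: diffop_ord_Vlinear d0 | apply: diffop_ord_Vlinear ek].
  by move=> r y; rewrite ek.2 dM.
move=> r; rewrite -/(ad r _).
have -> : ad r (fun y => d (e y)) = (fun y => d (ad r e y)).
  by apply/funext => y; rewrite /ad (additiveB dD) dM.
exact: IH (ek.2 r).
Qed.

Lemma diffop_ord_comp0 k d e : diffop_ord iota k d -> diffop_ord iota 0 e ->
  diffop_ord iota k (fun y => d (e y)).
Proof.
move=> + e0; elim: k d => [|k IH] d dk; split; try by apply: Vlinear_comp;
  [apply: diffop_ord_Vlinear dk | apply: diffop_ord_Vlinear e0].
  by move=> r y; rewrite e0.2 dk.2.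
move=> r; rewrite -/(ad r _).
have -> : ad r (fun y => d (e y)) = (fun y => ad r d (e y)).
  by apply/funext => y; rewrite /ad e0.2.
exact: IH (dk.2 r).
Qed.

Lemma diffop_ord_comp k l d e : diffop_ord iota k d -> diffop_ord iota l e ->
  diffop_ord iota (k + l) (fun y => d (e y)).
Proof.
elim: k l d e => [|k IH] l d e dk el; first exact: diffop_ord0_comp.
elim: l e el => [|l IHl] e el; first by rewrite addn0; apply: diffop_ord_comp0.
split; first by apply: Vlinear_comp;
  [apply: diffop_ord_Vlinear dk | apply: diffop_ord_Vlinear el].
move=> r; rewrite -/(ad r _).
have -> : ad r (fun y => d (e y)) = (fun y => d (ad r e y) + ad r d (e y)).
  apply/funext => y; rewrite /ad (additiveB (diffop_ord_Vlinear dk).1).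
  by rewrite addrA subrK.
apply: diffop_ord_add; last exact: IH (dk.2 r) el.
by rewrite -addSnnS; apply: IHl (el.2 r).
Qed.

Lemma diffop_ord0_mulop r : diffop_ord iota 0 (mulop r).
Proof. by split; first split; move=> *; rewrite /mulop (mulrDr, mulrCA). Qed.

Lemma diffop_mulop r : diffop iota (mulop r).
Proof. by exists 0%N; apply: diffop_ord0_mulop. Qed.

Lemma diffop_const0 : diffop iota (fun _ => 0).
Proof. by exists 0%N; apply: diffop_ord_const0. Qed.

Lemma diffop_add d e : diffop iota d -> diffop iota e ->
  diffop iota (fun y => d y + e y).
Proof.
move=> [k dk] [l el]; exists (maxn k l).
exact: diffop_ord_add (diffop_ord_le (leq_maxl k l) dk) (diffop_ord_le (leq_maxr k l) el).
Qed.

Lemma diffop_comp d e : diffop iota d -> diffop iota e ->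
  diffop iota (fun y => d (e y)).
Proof. by move=> [k dk] [l el]; exists (k + l)%N; apply: diffop_ord_comp. Qed.

Lemma ad_mulop r d : ad r d = (fun y => d (mulop r y) + mulop (- r) (d y)).
Proof. by apply/funext => y; rewrite /ad /mulop mulNr. Qed.

Lemma diffop_ad r d : diffop iota d -> diffop iota (ad r d).
Proof.
move=> dd; rewrite ad_mulop.
by apply: diffop_add; apply: diffop_comp => //; apply: diffop_mulop.
Qed.

Lemma diffop_iter D j : diffop iota D -> diffop iota (iter j D).
Proof.
move=> dD; elim: j => [|j IH]; last exact: diffop_comp.
have -> : iter 0 D = mulop 1 by apply/funext => y; rewrite /mulop mul1r.
exact: diffop_mulop.
Qed.

Lemma derivation_diffop D : derivation D -> (forall v, D (iota v) = 0) ->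
  diffop iota D.
Proof.
move=> [DD DM] DV; exists 1%N; split; first by split=> // v y; rewrite DM DV mul0r addr0.
move=> r; rewrite -/(ad r D).
have -> : ad r D = mulop (D r).
  by apply/funext => y; rewrite /ad /mulop DM addrC addKr mulrC.
exact: diffop_ord0_mulop.
Qed.

Lemma diffop_iter_ad r j d : diffop iota d -> diffop iota (iter j (ad r) d).
Proof. by move=> dd; elim: j => [|j IH] //=; apply: diffop_ad. Qed.

Lemma diffop_ord_iter_ad r k d : diffop_ord iota k d ->
  iter k.+1 (ad r) d = (fun _ => 0).
Proof.
elim: k d => [|k IH] d dk; first exact: ad_diffop_ord0.
by rewrite iterSr; apply: IH; apply: dk.2.
Qed.

End DifferentialOperators.

Section Annihilation.
Variables (V R : comNzRingType) (iota : V -> R) (M : DModule iota).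
Implicit Types (d e f : R -> R) (a r : R).

Lemma dm_act0 d : diffop iota d -> dm_act M d 0 = 0.
Proof. by move=> dd; apply: (addrI (dm_act M d 0)); rewrite -dm_act_addm // !addr0. Qed.

Lemma dm_act_const0 (m : M) : dm_act M (fun _ => 0) m = 0.
Proof.
apply: (addrI (dm_act M (fun _ => 0) m)).
rewrite addr0 -dm_act_addd; try exact: diffop_const0.
by congr dm_act; apply/funext => y; rewrite addr0.
Qed.

Definition annihilates f : Prop := diffop iota f /\ forall m : M, dm_act M f m = 0.

Lemma annihilates_const0 : annihilates (fun _ => 0).
Proof. by split; [apply: diffop_const0 | apply: dm_act_const0]. Qed.

Lemma annihilates_add f g : annihilates f -> annihilates g ->
  annihilates (fun y => f y + g y).
Proof.
move=> [df fM] [dg gM]; split; first exact: diffop_add.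
by move=> m; rewrite dm_act_addd // fM gM addr0.
Qed.

Lemma annihilates_compl d f : diffop iota d -> annihilates f ->
  annihilates (fun y => d (f y)).
Proof.
move=> dd [df fM]; split; first exact: diffop_comp.
by move=> m; rewrite dm_act_comp // fM dm_act0.
Qed.

Lemma annihilates_compr f d : annihilates f -> diffop iota d ->
  annihilates (fun y => f (d y)).
Proof.
move=> [df fM] dd; split; first exact: diffop_comp.
by move=> m; rewrite dm_act_comp // fM.
Qed.

Lemma annihilates_sum I (s : seq I) (F : I -> R -> R) :
  (forall i, annihilates (F i)) -> annihilates (fun y => \sum_(i <- s) F i y).
Proof.
move=> FA; elim: s => [|i s IH].
  rewrite (_ : (fun _ => _) = fun _ => 0); first exact: annihilates_const0.
  by apply/funext => y; rewrite big_nil.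
rewrite (_ : (fun _ => _) = fun y => F i y + \sum_(j <- s) F j y).
  exact: annihilates_add.
by apply/funext => y; rewrite big_cons.
Qed.

Lemma annihilates_ad r f : annihilates f -> annihilates (ad r f).
Proof.
move=> fA; rewrite ad_mulop; apply: annihilates_add.
  by apply: annihilates_compr => //; apply: diffop_mulop.
by apply: annihilates_compl => //; apply: diffop_mulop.
Qed.

Lemma annihilates_mulop a : annihilates (mulop a) <-> annihilator M a.
Proof. by split=> [[]|aM] //; split=> //; apply: diffop_mulop. Qed.

Lemma annihilator0 : annihilator M 0.
Proof.
apply/annihilates_mulop; rewrite (_ : mulop 0 = fun _ => 0).
  exact: annihilates_const0.
by apply/funext => y; rewrite /mulop mul0r.
Qed.

Lemma annihilatorD a b : annihilator M a -> annihilator M b ->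
  annihilator M (a + b).
Proof.
move=> /annihilates_mulop aA /annihilates_mulop bA; apply/annihilates_mulop.
rewrite (_ : mulop _ = fun y => mulop a y + mulop b y).
  exact: annihilates_add.
by apply/funext => y; rewrite /mulop mulrDl.
Qed.

Lemma annihilatorMl r a : annihilator M a -> annihilator M (r * a).
Proof.
move=> /annihilates_mulop aA; apply/annihilates_mulop.
rewrite (_ : mulop _ = fun y => mulop r (mulop a y)).
  by apply: annihilates_compl => //; apply: diffop_mulop.
by apply/funext => y; rewrite /mulop mulrA.
Qed.

Lemma annihilates_ad_annihilator a d : annihilator M a -> diffop iota d ->
  annihilates (ad a d).
Proof.
move=> aM dd; rewrite ad_mulop; apply: annihilates_add.
  exact/annihilates_compl/annihilates_mulop.
apply: annihilates_compr => //; apply/annihilates_mulop.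
by rewrite -mulN1r; apply: annihilatorMl.
Qed.

End Annihilation.

Lemma signed_ffact_succ (R : pzRingType) k j : (j < k)%N ->
  ((-1) ^+ j.+1 *+ k ^_ (k - j.+1)) *+ j.+1 = - ((-1) ^+ j *+ k ^_ (k - j)) :> R.
Proof.
move=> jk; rewrite -mulrnA -(subnSK jk) ffactnSr subKn //.
by rewrite exprS mulN1r mulNrn.
Qed.

Section Straightening.
Variables (V R : comNzRingType) (iota : V -> R) (x : R) (D : R -> R).
Hypotheses (dD : diffop iota D) (Dx : forall y, D (x * y) = x * D y + y).

(* [k ^_ (k - j)] is the falling factorial k!/j!. *)
Definition straighten k (e : R -> R) : R -> R := fun y =>
  \sum_(j < k.+1) ((-1) ^+ j *+ k ^_ (k - j)) * iter j (ad x) e (iter j D y).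

Lemma iter_D_mulx j y : iter j D (x * y) = x * iter j D y + iter j.-1 D y *+ j.
Proof.
have [DD _] := diffop_Vlinear dD.
elim: j => [|j IH]; first by rewrite mulr0n addr0.
rewrite [LHS]/= IH DD Dx (additiveMn DD); case: j {IH} => [|j] /=.
  by rewrite mulr0n addr0 mulr1n.
by rewrite [in RHS]mulrS addrA.
Qed.

Lemma straighten_mulx k e : diffop_ord iota k e -> {morph straighten k e : y / x * y}.
Proof.
move=> ek y; have de : diffop iota e by exists k.
have ad_mulx (f : R -> R) z : f (x * z) = x * f z + ad x f z.
  by rewrite /ad addrC subrK.
pose c j : R := (-1) ^+ j *+ k ^_ (k - j).
pose A j := iter j (ad x) e.
pose b j := c j * A j.+1 (iter j D y).
pose g j := c j * A j (iter j.-1 D y) *+ j.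
have term j : c j * A j (iter j D (x * y)) = x * (c j * A j (iter j D y)) + (b j + g j).
  have [AD _] := diffop_Vlinear (diffop_iter_ad x j de).
  rewrite /b /g /A iter_D_mulx AD (additiveMn AD) ad_mulx /=.
  ring.
rewrite /straighten
  (eq_bigr (fun j : 'I_k.+1 => x * (c j * A j (iter j D y)) + (b j + g j)));
  last by move=> j _; exact: term.
rewrite big_split /= -mulr_sumr.
rewrite -[RHS]addr0 big_split /=; congr (_ + _).
rewrite big_ord_recr big_ord_recl /= /b /g /A (diffop_ord_iter_ad x ek).
rewrite mulr0 addr0 mulr0n add0r -big_split big1 // => j _ /=.
by rewrite /bump leq0n add1n -mulrnAl signed_ffact_succ // mulNr addrN.
Qed.

Lemma iter_D1 j : D 1 = 0 -> iter j.+1 D 1 = 0.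
Proof.
move=> D1; have [DD _] := diffop_Vlinear dD.
by elim: j => [|j IH] //=; rewrite -/(iter j.+1 D 1) IH (additive0 DD).
Qed.

Lemma straighten1 k e : D 1 = 0 -> diffop iota e ->
  straighten k e 1 = k`!%:R * e 1.
Proof.
move=> D1 de; rewrite /straighten big_ord_recl subn0 ffactnn big1 => [|j _].
  by rewrite expr0 addr0.
have [AD _] := diffop_Vlinear (diffop_iter_ad x j.+1 de).
by rewrite lift0 iter_D1 // (additive0 AD) mulr0.
Qed.

Lemma straighten_commute z k e :
  {morph D : y / z * y} -> {morph e : y / z * y} -> {morph straighten k e : y / z * y}.
Proof.
move=> Dz ez y; rewrite /straighten mulr_sumr; apply: eq_bigr => j _.
have Dj : {morph iter j D : w / z * w}.
  by elim: (nat_of_ord j) => [|i IH] w //=; rewrite IH Dz.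
have Aj : {morph iter j (ad x) e : w / z * w}.
  elim: (nat_of_ord j) => [|i IH] w /=; first exact: ez.
  by rewrite /ad mulrCA !IH mulrCA -mulrBr.
by rewrite Dj Aj mulrCA.
Qed.

Lemma annihilates_straighten (M : DModule iota) k e :
  annihilates M e -> annihilates M (straighten k e).
Proof.
move=> eM; apply: annihilates_sum => j.
apply: annihilates_compl; first exact: diffop_mulop.
apply: annihilates_compr; last exact: diffop_iter.
by elim: (nat_of_ord j) => [|i IH] //=; apply: annihilates_ad.
Qed.

End Straightening.

Section Coordinates.
Variables (V R : comNzRingType) (iota : V -> R) (n : nat) (xs : nat -> R).

Inductive Vpoly : R -> Prop :=
| Vpoly_const v : Vpoly (iota v)
| Vpoly_coord i : (i < n)%N -> Vpoly (xs i)
| Vpoly_add a b : Vpoly a -> Vpoly b -> Vpoly (a + b)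
| Vpoly_mul a b : Vpoly a -> Vpoly b -> Vpoly (a * b).

Definition trivial_commutant : Prop :=
  forall E : R -> R, Vlinear iota E ->
    (forall i, (i < n)%N -> {morph E : y / xs i * y}) -> forall r, E r = r * E 1.

(* For power series rings, [trivial_commutant] is derived from the next two
   properties, which unlike it pass from A to A[[x]]. *)
Definition approximable : Prop :=
  forall r N, exists P (g : nat -> R),
    Vpoly P /\ r = P + \sum_(i < n) xs i ^+ N * g i.

Definition separated : Prop :=
  forall h, (forall N, exists g : nat -> R, h = \sum_(i < n) xs i ^+ N * g i) ->
    h = 0.

Section Commutant.
Variable E : R -> R.
Hypotheses (EV : Vlinear iota E) (Exs : forall i, (i < n)%N -> {morph E : y / xs i * y}).

Lemma Vpoly_commute r : Vpoly r -> {morph E : y / r * y}.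
Proof.
case: EV => ED EM.
elim=> {r} [v|i /Exs //|a b _ Ea _ Eb|a b _ Ea _ Eb] y.
- exact: EM.
- by rewrite mulrDl ED Ea Eb mulrDl.
- by rewrite -mulrA Ea Eb mulrA.
Qed.

Lemma Vpoly_mulop r : Vpoly r -> E r = r * E 1.
Proof. by move=> /Vpoly_commute <-; rewrite mulr1. Qed.

End Commutant.

Lemma trivial_commutant_Vpoly : (forall r, Vpoly r) -> trivial_commutant.
Proof. by move=> allV E EV Exs r; apply: Vpoly_mulop. Qed.

Lemma trivial_commutant_separated : approximable -> separated -> trivial_commutant.
Proof.
move=> appr sep E EV Exs r; apply/eqP; rewrite -subr_eq0; apply/eqP/sep => N.
have [P [g [VP ->]]] := appr r N; have [ED _] := EV.
exists (fun i => E (g i) - g i * E 1).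
rewrite ED (additive_sum ED) (Vpoly_mulop EV Exs VP) mulrDl opprD addrACA subrr.
rewrite add0r mulr_suml -sumrB; apply: eq_bigr => i _.
have xN : {morph E : y / xs i ^+ N * y}.
  elim: N {P VP} => [|N IH] y; first by rewrite !mul1r.
  by rewrite exprS -mulrA (Exs _ (ltn_ord i)) IH mulrA.
by rewrite xN mulrBr mulrA.
Qed.

End Coordinates.

Section VpolyClosure.
Variables (V R : comNzRingType) (iota : {rmorphism V -> R}) (n : nat) (xs : nat -> R).

Lemma Vpoly_exp a m : Vpoly iota n xs a -> Vpoly iota n xs (a ^+ m).
Proof.
move=> Va; elim: m => [|m IH]; last by rewrite exprS; apply: Vpoly_mul.
by rewrite expr0 -(rmorph1 iota); apply: Vpoly_const.
Qed.

Lemma Vpoly_sum I (s : seq I) (F : I -> R) :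
  (forall i, Vpoly iota n xs (F i)) -> Vpoly iota n xs (\sum_(i <- s) F i).
Proof.
move=> VF; apply: big_ind => //; last exact: Vpoly_add.
by rewrite -(rmorph0 iota); apply: Vpoly_const.
Qed.

End VpolyClosure.

Lemma Vpoly_lift (V A B : comNzRingType) (iA : V -> A) (iB : V -> B)
    (C : {rmorphism A -> B}) n (xsA : nat -> A) (xsB : nat -> B) :
  (forall v, C (iA v) = iB v) -> (forall j, (j < n)%N -> C (xsA j) = xsB j.+1) ->
  forall a, Vpoly iA n xsA a -> Vpoly iB n.+1 xsB (C a).
Proof.
move=> Ci Cxs a; elim=> {a} [v|j lt_jn|a b _ Ca _ Cb|a b _ Ca _ Cb].
- by rewrite Ci; apply: Vpoly_const.
- by rewrite Cxs //; apply: Vpoly_coord.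
- by rewrite rmorphD; apply: Vpoly_add.
- by rewrite rmorphM; apply: Vpoly_mul.
Qed.

Definition dual_coordinates (V R : comNzRingType) (iota : V -> R) n
    (xs : nat -> R) (ds : nat -> R -> R) : Prop :=
  forall i, (i < n)%N -> [/\ derivation (ds i), forall v, ds i (iota v) = 0
    & forall j, (j < n)%N -> ds i (xs j) = (i == j)%:R].

Section AnnihilatorDerivatives.
Variables (V R : comNzRingType) (iota : V -> R) (M : DModule iota).
Variables (n : nat) (xs : nat -> R) (ds : nat -> R -> R).
Hypotheses (dual : dual_coordinates iota n xs ds)
  (commutant : trivial_commutant iota n xs).

Lemma annihilates_straighten_coords i E : (i <= n)%N -> annihilates M E ->
  exists2 E', annihilates M E' /\ (forall j, (j < i)%N -> {morph E' : y / xs j * y})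
    & exists2 N, (0 < N)%N & E' 1 = N%:R * E 1.
Proof.
elim: i => [|i IH] lei EM.
  by exists E => //; exists 1%N; rewrite ?mul1r.
have [E' [E'M E'xs] [N N0 E'1]] := IH (ltnW lei) EM.
have [dsi dsV dsxs] := dual lei.
have dD := derivation_diffop dsi dsV.
have [k E'k] := E'M.1.
exists (straighten (xs i) (ds i) k E').
  split; first exact: annihilates_straighten.
  move=> j; rewrite ltnS leq_eqVlt => /orP[/eqP ->|ji].
    apply: (straighten_mulx dD) E'k => y.
    by rewrite dsi.2 dsxs // eqxx mul1r.
  apply: straighten_commute => [y|]; last exact: E'xs.
  by rewrite dsi.2 dsxs ?(ltn_trans ji) // (gtn_eqF ji) mul0r addr0.
exists (N * k`!)%N; first by rewrite muln_gt0 N0 fact_gt0.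
rewrite (straighten1 _ dD) ?(derivation1 dsi) //; last by exists k.
by rewrite E'1 mulrA -natrM mulnC.
Qed.

Lemma annihilator_diff_multiple a d : annihilator M a -> diffop iota d ->
  exists2 N, (0 < N)%N & annihilator M (N%:R * d a).
Proof.
move=> aM dd.
have [E [EM Exs] [N N0 E1]] :=
  annihilates_straighten_coords (leqnn n) (annihilates_ad_annihilator aM dd).
exists N => //.
have EE1 : E = mulop (E 1).
  apply/funext => r; rewrite /mulop mulrC.
  exact: (commutant (diffop_Vlinear EM.1) Exs).
have : annihilator M (E 1) by apply/annihilates_mulop; rewrite -EE1.
rewrite E1 /ad mulr1 => NaM.
rewrite (_ : _ * d a = N%:R * (d a - a * d 1) + d 1 * N%:R * a); last by ring.
by apply: annihilatorD => //; apply: annihilatorMl.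
Qed.

End AnnihilatorDerivatives.

Section Saturation.
Variables (V : idomainType) (R : comNzRingType) (iota : {rmorphism V -> R}).
Variables (pi : V) (I : R -> Prop).
Hypotheses (dvr : is_DVR_with_uniformizer V pi) (char0 : char_zero V).
Hypotheses (I0 : I 0) (ID : forall a b, I a -> I b -> I (a + b))
  (IMl : forall r a, I a -> I (r * a)).
Hypothesis Idiff : forall d a, diffop iota d -> I a ->
  exists2 N, (0 < N)%N & I (N%:R * d a).

Lemma saturation_D_submodule : is_D_submodule iota (saturation iota pi I).
Proof.
split; first by exists 0%N; rewrite mul0r.
  move=> a b [m aI] [l bI]; exists (m + l)%N.
  rewrite (_ : _ * _ =
    iota pi ^+ l * (a * iota pi ^+ m) + iota pi ^+ m * (b * iota pi ^+ l)).
    exact: ID (IMl _ aI) (IMl _ bI).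
  by rewrite exprD; ring.
move=> d a dd [m aI]; have [N N0 NI] := Idiff dd aI.
have [_ _ /(_ _ (char0 N0)) [u [j [uU Nu]]]] := dvr.
exists (m + j)%N.
have dpi : d (a * iota pi ^+ m) = iota pi ^+ m * d a.
  by rewrite mulrC -rmorphXn (diffop_Vlinear dd).2.
have Nj : (N%:R : R) = iota u * iota pi ^+ j.
  by rewrite -(rmorph_nat iota) Nu rmorphM rmorphXn.
rewrite dpi Nj in NI.
rewrite (_ : _ * _ = iota u^-1 * (iota u * iota pi ^+ j * (iota pi ^+ m * d a))).
  exact: IMl.
have uK : iota u^-1 * iota u = 1 by rewrite -rmorphM mulVr // rmorph1.
by rewrite !mulrA uK mul1r exprD; ring.
Qed.

End Saturation.

Section PowerSeries.
Variable A : comNzRingType.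
Implicit Types (f g : pser A) (a : A).

Lemma psaddE f g k : (f + g) k = f k + g k. Proof. by []. Qed.

Lemma psmulE f g k : (f * g) k = \sum_(i < k.+1) f i * g (k - i)%N.
Proof. by []. Qed.

Lemma pssumE I (s : seq I) (F : I -> pser A) k :
  (\sum_(i <- s) F i) k = \sum_(i <- s) F i k.
Proof. by elim: s => [|i s IH]; rewrite ?big_nil ?big_cons // psaddE IH. Qed.

Lemma psC_mulE a g k : (psC a * g) k = a * g k.
Proof. by rewrite psmulE big_ord_recl subn0 big1 ?addr0 // => i _; rewrite mul0r. Qed.

Lemma psC_is_zmod_morphism : zmod_morphism (@psC A).
Proof. by move=> a b; apply/funext => -[|k] //=; rewrite psaddE /= subr0. Qed.

Lemma psC_is_monoid_morphism : monoid_morphism (@psC A).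
Proof.
split; first by apply/funext => -[|k].
by move=> a b; apply/funext => k; rewrite psC_mulE; case: k => [|k] //=; rewrite mulr0.
Qed.

Definition psX : pser A := fun k => (k == 1)%:R.

Lemma psX_mulE g k : (psX * g) k = if k is k'.+1 then g k' else 0.
Proof.
rewrite psmulE big_ord_recl /= mul0r add0r; case: k => [|k]; first by rewrite big_ord0.
rewrite big_ord_recl /= mul1r subSS subn0 big1 ?addr0 // => i _.
by rewrite /psX /bump /= mul0r.
Qed.

Lemma psXn_mulE N g k : (psX ^+ N * g) k = if (k < N)%N then 0 else g (k - N)%N.
Proof.
elim: N k => [|N IH] k; first by rewrite expr0 mul1r subn0.
by rewrite exprS -mulrA psX_mulE; case: k => [|k] //; rewrite IH ltnS subSS.
Qed.

Lemma ps_decomp N f :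
  f = \sum_(k < N) psC (f k) * psX ^+ k + psX ^+ N * (fun k => f (k + N)%N).
Proof.
elim: N => [|N IH].
  by rewrite big_ord0 add0r mul1r; apply/funext => k; rewrite addn0.
have step : (fun k => f (k + N)%N) = psC (f N) + psX * (fun k => f (k + N.+1)%N).
  by apply/funext => -[|k]; rewrite psaddE psX_mulE /= ?addr0 ?add0r ?addSnnS.
by rewrite {1}IH big_ord_recr /= step exprS; ring.
Qed.

End PowerSeries.

HB.instance Definition _ (A : comNzRingType) :=
  GRing.isZmodMorphism.Build A (pser A) (@psC A) (@psC_is_zmod_morphism A).
HB.instance Definition _ (A : comNzRingType) :=
  GRing.isMonoidMorphism.Build A (pser A) (@psC A) (@psC_is_monoid_morphism A).

Section PowerSeriesDerivations.
Variable A : comNzRingType.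
Implicit Types (f g : pser A) (D : A -> A).

Definition psderiv f : pser A := fun k => f k.+1 *+ k.+1.

Lemma derivation_psderiv : derivation psderiv.
Proof.
split=> [f g|f g]; apply/funext => k; first by rewrite /psderiv !psaddE mulrnDl.
rewrite /psderiv psaddE !psmulE -sumrMnl.
rewrite (eq_bigr (fun i : 'I_k.+2 => (f i * g (k.+1 - i)%N) *+ i +
    (f i * g (k.+1 - i)%N) *+ (k.+1 - i))); last first.
  by move=> i _; rewrite -mulrnDr subnKC // -ltnS.
rewrite big_split /= addrC; congr (_ + _).
  rewrite big_ord_recr /= subnn mulr0n addr0; apply: eq_bigr => i _.
  by rewrite subSn ?mulrnAr // -ltnS.
rewrite big_ord_recl /= mulr0n add0r; apply: eq_bigr => i _.
by rewrite /bump /= add1n subSS mulrnAl.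
Qed.

Lemma psderivC a : psderiv (psC a) = 0.
Proof. by apply/funext => k; rewrite /psderiv /= mul0rn. Qed.

Lemma psderivX : psderiv (psX A) = 1.
Proof. by apply/funext => -[|k]; rewrite /psderiv /psX /= ?mul0rn. Qed.

Definition map_pser D f : pser A := fun k => D (f k).

Lemma derivation_map_pser D : derivation D -> derivation (map_pser D).
Proof.
case=> DD DM; split=> f g; apply/funext => k; first by rewrite /map_pser !psaddE DD.
rewrite /map_pser psaddE !psmulE (additive_sum DD) -big_split.
by apply: eq_bigr => i _; rewrite DM.
Qed.

Lemma map_pserC_id0 D a : D 0 = 0 -> map_pser D (psC a) = psC (D a).
Proof. by move=> D0; apply/funext => -[|k]. Qed.

Lemma derivation_map_pserX D : derivation D -> map_pser D (psX A) = 0.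
Proof.
move=> Dder; apply/funext => k; rewrite /map_pser /psX.
by case: eqP => _; rewrite ?(derivation1 Dder) ?(additive0 Dder.1).
Qed.

End PowerSeriesDerivations.

Section PolynomialDerivations.
Variables (A : comNzRingType) (D : A -> A).
Hypothesis Dder : derivation D.
Let D0 : D 0 = 0 := additive0 Dder.1.

Lemma derivation_map_poly : derivation (map_poly D).
Proof.
have [DD DM] := Dder.
split=> p q; apply/polyP => k.
  by rewrite coefD !coef_map_id0 // coefD DD.
rewrite coefD !coefM coef_map_id0 // coefM (additive_sum DD) -big_split.
by apply: eq_bigr => j _; rewrite DM !coef_map_id0.
Qed.

Lemma map_polyC_id0 a : map_poly D a%:P = (D a)%:P.
Proof. by apply/polyP => k; rewrite coef_map_id0 // !coefC; case: eqP. Qed.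

Lemma derivation_map_polyX : map_poly D 'X = 0.
Proof.
apply/polyP => k; rewrite coef_map_id0 // coefX coef0.
by case: eqP => _; rewrite ?(derivation1 Dder).
Qed.

End PolynomialDerivations.

Lemma derivation_deriv (A : comNzRingType) : derivation (@deriv A).
Proof. by split=> p q; rewrite (derivD, derivM) // addrC mulrC. Qed.

Section PolynomialStep.
Variables (V A : comNzRingType) (iota : {rmorphism V -> A}).
Variables (n : nat) (xs : nat -> A) (ds : nat -> A -> A).

Definition poly_coords (i : nat) : {poly A} :=
  if i is i'.+1 then (xs i')%:P else 'X.
Definition poly_derivs (i : nat) : {poly A} -> {poly A} :=
  if i is i'.+1 then map_poly (ds i') else deriv.

Lemma dual_coordinates_poly : dual_coordinates iota n xs ds ->
  dual_coordinates (polyC \o iota) n.+1 poly_coords poly_derivs.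
Proof.
move=> dual [|i] lti.
  split=> [|v|[|j] ltj]; rewrite /= ?derivX ?derivC //; exact: derivation_deriv.
have [dsi dsV dsxs] := dual i lti.
split=> [|v|[|j] ltj] /=; first exact: derivation_map_poly.
- by rewrite map_polyC_id0 // dsV.
- exact: derivation_map_polyX.
- by rewrite map_polyC_id0 // dsxs // polyC_natr.
Qed.

Lemma Vpoly_poly : (forall a, Vpoly iota n xs a) ->
  forall p, Vpoly (polyC \o iota) n.+1 poly_coords p.
Proof.
move=> allV p; rewrite -[p]coefK poly_def; apply: Vpoly_sum => i.
rewrite -mul_polyC; apply: Vpoly_mul; first exact: (Vpoly_lift (C := polyC)).
by apply: Vpoly_exp; apply: (@Vpoly_coord _ _ _ _ _ 0%N).
Qed.

End PolynomialStep.

Section PowerSeriesStep.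
Variables (V A : comNzRingType) (iota : {rmorphism V -> A}).
Variables (n : nat) (xs : nat -> A) (ds : nat -> A -> A).

Definition pser_coords (i : nat) : pser A :=
  if i is i'.+1 then psC (xs i') else psX A.
Definition pser_derivs (i : nat) : pser A -> pser A :=
  if i is i'.+1 then map_pser (ds i') else @psderiv A.

Lemma dual_coordinates_pser : dual_coordinates iota n xs ds ->
  dual_coordinates (@psC A \o iota) n.+1 pser_coords pser_derivs.
Proof.
move=> dual [|i] lti.
  split=> [|v|[|j] ltj]; rewrite /= ?psderivX ?psderivC //; exact: derivation_psderiv.
have [dsi dsV dsxs] := dual i lti; have D0 := additive0 dsi.1.
split=> [|v|[|j] ltj] /=; first exact: derivation_map_pser.
- by rewrite map_pserC_id0 // dsV rmorph0.
- exact: derivation_map_pserX.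
- by rewrite map_pserC_id0 // dsxs // rmorph_nat.
Qed.

Lemma approximable_pser : approximable iota n xs ->
  approximable (@psC A \o iota) n.+1 pser_coords.
Proof.
move=> appr f N.
have /choice [Pg PgP] : forall k, exists Pg : A * (nat -> A),
    Vpoly iota n xs Pg.1 /\ f k = Pg.1 + \sum_(i < n) xs i ^+ N * Pg.2 i.
  by move=> k; have [P [g PgE]] := appr (f k) N; exists (P, g).
exists (\sum_(k < N) psC (Pg k).1 * psX A ^+ k).
exists (fun i => if i is i'.+1 then \sum_(k < N) psC ((Pg k).2 i') * psX A ^+ k
                 else fun k => f (k + N)%N).
split.
  apply: Vpoly_sum => k; apply: Vpoly_mul.
    by apply: (Vpoly_lift (C := @psC A)) (PgP k).1.
  by apply: Vpoly_exp; apply: (@Vpoly_coord _ _ _ _ _ 0%N).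
rewrite {1}(ps_decomp N f) big_ord_recl /=.
under eq_bigr => k _ do rewrite (PgP k).2 rmorphD rmorph_sum mulrDl mulr_suml.
rewrite big_split /= exchange_big /= -!addrA; congr (_ + _).
rewrite addrC; congr (_ + _); apply: eq_bigr => i _.
rewrite add0n mulr_sumr; apply: eq_bigr => k _.
by rewrite rmorphM rmorphXn mulrA.
Qed.

Lemma separated_pser : separated n xs -> separated n.+1 pser_coords.
Proof.
move=> sep h hN; apply/funext => k; apply: sep => N.
have leNM : (N <= maxn N k.+1)%N by rewrite leq_maxl.
have [g ->] := hN (maxn N k.+1).
exists (fun i => xs i ^+ (maxn N k.+1 - N) * g i.+1 k).
rewrite pssumE big_ord_recl /= psXn_mulE leq_max ltnSn orbT add0r.
apply: eq_bigr => i _; rewrite add0n -rmorphXn psC_mulE mulrA -exprD.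
by rewrite subnKC.
Qed.

End PowerSeriesStep.

Lemma polynC_is_zmod_morphism (V : comNzRingType) n : zmod_morphism (polynC V n).
Proof. by elim: n => [|n IH] // a b /=; rewrite IH rmorphB. Qed.

Lemma polynC_is_monoid_morphism (V : comNzRingType) n : monoid_morphism (polynC V n).
Proof.
elim: n => [|n [IH1 IHM]] //; split=> [|a b] /=; first by rewrite IH1 rmorph1.
by rewrite IHM rmorphM.
Qed.

HB.instance Definition _ (V : comNzRingType) (n : nat) :=
  GRing.isZmodMorphism.Build V _ (polynC V n) (@polynC_is_zmod_morphism V n).
HB.instance Definition _ (V : comNzRingType) (n : nat) :=
  GRing.isMonoidMorphism.Build V _ (polynC V n)
    (@polynC_is_monoid_morphism V n).

Lemma psernC_is_zmod_morphism (V : comNzRingType) n : zmod_morphism (psernC V n).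
Proof. by elim: n => [|n IH] // a b /=; rewrite IH rmorphB. Qed.

Lemma psernC_is_monoid_morphism (V : comNzRingType) n : monoid_morphism (psernC V n).
Proof.
elim: n => [|n [IH1 IHM]] //; split=> [|a b] /=; first by rewrite IH1 rmorph1.
by rewrite IHM rmorphM.
Qed.

HB.instance Definition _ (V : comNzRingType) (n : nat) :=
  GRing.isZmodMorphism.Build V _ (psernC V n) (@psernC_is_zmod_morphism V n).
HB.instance Definition _ (V : comNzRingType) (n : nat) :=
  GRing.isMonoidMorphism.Build V _ (psernC V n)
    (@psernC_is_monoid_morphism V n).

Lemma Rmap_is_zmod_morphism b (V : comNzRingType) n : zmod_morphism (Rmap b V n).
Proof. by case: b => a c /=; rewrite rmorphB. Qed.

Lemma Rmap_is_monoid_morphism b (V : comNzRingType) n : monoid_morphism (Rmap b V n).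
Proof. by case: b; split=> [|a c] /=; rewrite ?rmorph1 ?rmorphM. Qed.

HB.instance Definition _ b (V : comNzRingType) (n : nat) :=
  GRing.isZmodMorphism.Build V (Rring b V n) (Rmap b V n) (@Rmap_is_zmod_morphism b V n).
HB.instance Definition _ b (V : comNzRingType) (n : nat) :=
  GRing.isMonoidMorphism.Build V (Rring b V n) (Rmap b V n)
    (@Rmap_is_monoid_morphism b V n).

Lemma polyn_coordinates (V : comNzRingType) n : exists xs ds,
  dual_coordinates (polynC V n) n xs ds /\ forall r, Vpoly (polynC V n) n xs r.
Proof.
elim: n => [|n [xs [ds [dual allV]]]].
  exists (fun _ => 0), (fun _ _ => 0); split=> // r.
  exact: (@Vpoly_const _ _ (polynC V 0) 0 _ r).
exists (poly_coords xs), (poly_derivs ds); split.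
  exact: (dual_coordinates_poly (iota := polynC V n)).
exact: (Vpoly_poly (iota := polynC V n)).
Qed.

Lemma psern_coordinates (V : comNzRingType) n : exists xs ds,
  [/\ dual_coordinates (psernC V n) n xs ds, approximable (psernC V n) n xs
    & separated n xs].
Proof.
elim: n => [|n [xs [ds [dual appr sep]]]].
  exists (fun _ => 0), (fun _ _ => 0); split=> //.
    move=> r N; exists r, (fun _ => 0); rewrite big_ord0 addr0; split=> //.
    exact: (@Vpoly_const _ _ (psernC V 0) 0 _ r).
  by move=> h /(_ 0%N) [g ->]; rewrite big_ord0.
exists (pser_coords xs), (pser_derivs ds); split.
- exact: (dual_coordinates_pser (iota := psernC V n)).
- exact: (approximable_pser (iota := psernC V n)).
- exact: separated_pser.
Qed.

Lemma Rmap_coordinates b (V : comNzRingType) n : exists xs ds,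
  dual_coordinates (Rmap b V n) n xs ds /\ trivial_commutant (Rmap b V n) n xs.
Proof.
case: b => /=.
  have [xs [ds [dual allV]]] := polyn_coordinates V n.
  by exists xs, ds; split=> //; apply: trivial_commutant_Vpoly.
have [xs [ds [dual appr sep]]] := psern_coordinates V n.
by exists xs, ds; split=> //; apply: trivial_commutant_separated.
Qed.

Theorem lemma3p3 (V : idomainType) (pi : V) (p : nat) (b : ring_kind) (n : nat)
  (hV : is_DVR_with_uniformizer V pi) (h0 : char_zero V)
  (hp : prime p) (hres : residue_char V pi p)
  (M : DModule (Rmap b V n)) :
  is_D_submodule (Rmap b V n)
    (saturation (Rmap b V n) pi (annihilator M)).
Proof.
have [xs [ds [dual commutant]]] := Rmap_coordinates b V n.
apply: saturation_D_submodule hV h0 _ _ _ _.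
- exact: annihilator0.
- exact: annihilatorD.
- exact: annihilatorMl.
- by move=> d a dd aM; exact: (annihilator_diff_multiple dual commutant aM dd).
Qed.
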